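(* Let $X$ be a real Banach space, $x \in S(X)$, $\gamma > 0$ and $k \in \mathbb{N}$ be such that $1 - 2k(1-\gamma) > 0$. Then \[ \operatorname{diam}\big(S(B(X^* ), x, 1 - 2k(1-\gamma))\big) \leq 2k \, \operatorname{diam}\big(S(B(X^* ), x, \gamma)\big). \]
   Context: $B(\cdot)$, $S(\cdot)$ denote closed unit ball and unit sphere. For $x \in S(X)$ and real $\alpha$, the w*-slice is $S(B(X^* ), x, \alpha) := \{g \in B(X^* ) : g(x) > \alpha\}$ (the diameter of the empty set is taken as $0$). *)

From HB Require Import structures.
From mathcomp Require Import all_boot all_order all_algebra.
From mathcomp Require Import all_classical all_reals all_analysis.
Set Implicit Arguments. Unset Strict Implicit. Unset Printing Implicit Defensive.
Import Order.TTheory GRing.Theory Num.Theory.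
Import numFieldNormedType.Exports.
Local Open Scope classical_set_scope.
Local Open Scope ring_scope.

Definition is_lin_functional (R : realType) (X : normedModType R) (f : X -> R) :=
  forall (a : R) (y z : X), f (a *: y + z) = a * f y + f z.

Definition dual_norm (R : realType) (X : normedModType R) (f : X -> R) : \bar R :=
  ereal_sup [set (`|f y|)%:E | y in [set y : X | `|y| <= 1]].

(* Closed unit ball B(X^* ) of the dual: linear functionals of dual norm <= 1
   (these are automatically continuous). *)
Definition dual_ball (R : realType) (X : normedModType R) : set (X -> R) :=
  [set f | is_lin_functional f /\ (dual_norm f <= 1%:E)%E].

Definition wslice (R : realType) (X : normedModType R) (x : X) (alpha : R)
  : set (X -> R) :=
  [set g : X -> R | dual_ball g /\ alpha < g x].

(* Diameter w.r.t. the dual norm; the diameter of the empty set is 0. *)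
Definition dual_diam (R : realType) (X : normedModType R) (A : set (X -> R))
  : \bar R :=
  Order.max 0%E (ereal_sup [set dual_norm (f \- g) | f in A & g in A]).

From HB Require Import structures.
From mathcomp Require Import all_boot all_order all_algebra.
From mathcomp Require Import all_classical all_reals all_analysis.
From mathcomp Require Import ring lra.
Import Order.TTheory GRing.Theory Num.Theory.
Import numFieldNormedType.Exports.
Local Open Scope classical_set_scope.
Local Open Scope ring_scope.
Set Implicit Arguments. Unset Strict Implicit.

(* Let [phi] be a norming functional of [x] ([phi] in B(X^* ), [phi x = 1]) and
   [t = 1/(2k)].  The map [h |-> (1 - t) phi + t h] sends the slice of level
   [1 - 2k(1 - gamma)] into the slice of level [gamma] and multiplies distances
   by [t], so every distance in the first slice is at most [2k] times a distance
   in the second.  The norming functional comes from Hahn-Banach, proved by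
   Zorn's lemma on graphs of linear functionals dominated by the norm. *)

Section DualBall.
Variables (R : realType) (X : normedModType R).
Implicit Types (f g h : X -> R) (y : X).

Lemma lin_functional0 f : is_lin_functional f -> f 0 = 0.
Proof.
by move=> lf; have := lf 1 0 0; rewrite scale1r addr0 mul1r; lra.
Qed.

Lemma lin_functionalZ f a y : is_lin_functional f -> f (a *: y) = a * f y.
Proof. by move=> lf; rewrite -[a *: y]addr0 lf lin_functional0 // addr0. Qed.

Lemma dual_norm_le c f : 0 <= c -> (forall y, `|f y| <= c * `|y|) ->
  (dual_norm f <= c%:E)%E.
Proof.
move=> c0 fc; apply: ge_ereal_sup => _ [y /= y1 <-]; rewrite lee_fin.
by apply: le_trans (fc y) _; rewrite ler_piMr.
Qed.

Lemma dual_ball_le_norm f y : dual_ball f -> `|f y| <= `|y|.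
Proof.
move=> [lf nf]; have [->|y0] := eqVneq y 0.
  by rewrite lin_functional0 ?normr0.
have ny0 : 0 < `|y| by rewrite normr_gt0.
have : (`|f (`|y|^-1 *: y)|%:E <= 1)%E.
  apply: le_trans nf; apply: ereal_sup_ubound; exists (`|y|^-1 *: y) => //=.
  by rewrite normrZ normrV ?unitfE ?gt_eqF // normr_id mulVf ?gt_eqF.
rewrite lee_fin lin_functionalZ // normrM normrV ?unitfE ?gt_eqF // normr_id.
by rewrite ler_pdivrMl // mulr1.
Qed.

Lemma dual_norm_le_scale c f g : 0 <= c -> (forall y, `|f y| <= c * `|g y|) ->
  (dual_norm f <= c%:E * dual_norm g)%E.
Proof.
move=> c0 fg; apply: ge_ereal_sup => _ [y y1 <-].
apply: (@le_trans _ _ (c * `|g y|)%:E); first by rewrite lee_fin.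
by rewrite EFinM lee_wpmul2l ?lee_fin //; apply: ereal_sup_ubound; exists y.
Qed.

Lemma dual_diam_ge0 (A : set (X -> R)) : (0 <= dual_diam A)%E.
Proof. by rewrite /dual_diam le_max lexx. Qed.

Lemma dual_norm_le_diam (A : set (X -> R)) f g : A f -> A g ->
  (dual_norm (f \- g)%R <= dual_diam A)%E.
Proof.
move=> Af Ag; rewrite /dual_diam le_max; apply/orP; right.
by apply: ereal_sup_ubound; exists f => //; exists g.
Qed.

Lemma wslice_lt_norm (x : X) alpha f : wslice x alpha f -> alpha < `|x|.
Proof.
move=> [Bf fx]; apply: lt_le_trans fx _.
exact: le_trans (ler_norm _) (dual_ball_le_norm _ Bf).
Qed.

Definition dual_mix (t : R) f g := fun y => (1 - t) * f y + t * g y.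

Lemma dual_mix_sub t f g h y :
  dual_mix t f g y - dual_mix t f h y = t * (g y - h y).
Proof. by rewrite /dual_mix; ring. Qed.

Lemma wslice_mix (x : X) phi t alpha h : dual_ball phi -> phi x = 1 ->
  0 < t -> t <= 1 -> wslice x alpha h ->
  wslice x (1 - t * (1 - alpha)) (dual_mix t phi h).
Proof.
move=> Bphi phix t0 t1 [Bh hx]; split; first split.
- by move=> a y z; rewrite /dual_mix Bphi.1 Bh.1; ring.
- apply: dual_norm_le => // y; rewrite mul1r /dual_mix.
  apply: le_trans (ler_normD _ _) _.
  rewrite !normrM (ger0_norm (_ : 0 <= 1 - t)) ?subr_ge0 // (gtr0_norm t0).
  have := dual_ball_le_norm y Bphi; have := dual_ball_le_norm y Bh.
  nra.
- rewrite /dual_mix /= phix mulr1.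
  have : t * alpha < t * h x by rewrite ltr_pM2l.
  lra.
Qed.

End DualBall.

Section DominatedGraph.
Variables (R : realType) (X : normedModType R).

Definition linear_graph (G : set (X * R)) :=
  forall a p q, G p -> G q -> G (a *: p.1 + q.1, a * p.2 + q.2).

Definition norm_dominated (G : set (X * R)) := forall p, G p -> p.2 <= `|p.1|.

Variable G : set (X * R).
Hypothesis linG : linear_graph G.

Lemma linear_graph0 p : G p -> G (0, 0).
Proof.
by move=> Gp; have := linG (-1) Gp Gp; rewrite scaleN1r addNr mulN1r addNr.
Qed.

Lemma linear_graphZ a p : G p -> G (a *: p.1, a * p.2).
Proof.
by move=> Gp; have := linG a Gp (linear_graph0 Gp); rewrite /= !addr0.
Qed.

Hypothesis domG : norm_dominated G.

Lemma dominated_graph_functional y r s : G (y, r) -> G (y, s) -> r = s.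
Proof.
move=> Gr Gs; have := domG (linG (-1) Gr Gs); have := domG (linG (-1) Gs Gr).
rewrite /= scaleN1r addNr normr0 !mulN1r => sr rs.
by apply/eqP; rewrite eq_le; apply/andP; split; lra.
Qed.

Lemma dominated_extension_constant z : G !=set0 ->
  exists c, forall p, G p -> p.2 - `|p.1 - z| <= c /\ c <= `|p.1 + z| - p.2.
Proof.
move=> [p0 Gp0]; have G00 := linear_graph0 Gp0.
pose E := [set p.2 - `|p.1 - z| | p in G].
(* [p.2 + q.2 <= |p.1 + q.1| <= |p.1 - z| + |q.1 + z|] separates the two
   sides. *)
have E_ub q : G q -> ubound E (`|q.1 + z| - q.2).
  move=> Gq _ [p Gp <-]; have := domG (linG 1 Gp Gq).
  rewrite /= scale1r mul1r => dom_pq.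
  have : `|p.1 + q.1| <= `|p.1 - z| + `|q.1 + z|.
    by rewrite -[X in `|X|](addr0 (p.1 + q.1)) -(addNr z) addrACA ler_normD.
  lra.
have E_ne : E !=set0 by exists (0 - `|0 - z|), (0, 0).
have E_sup : has_sup E by split => //; eexists; apply: E_ub G00.
exists (sup E) => p Gp; split; first by apply: sup_upper_bound => //; exists p.
exact: ge_sup (E_ub _ Gp).
Qed.

Lemma dominated_extension_bound z c :
  (forall p, G p -> p.2 - `|p.1 - z| <= c /\ c <= `|p.1 + z| - p.2) ->
  forall p t, G p -> p.2 + t * c <= `|p.1 + t *: z|.
Proof.
move=> c_sep [y r] t Gp /=.
have [t_lt0|t_gt0|->] := ltgtP t 0.
- have nt_gt0 : 0 < - t by rewrite oppr_gt0.
  have [+ _] := c_sep _ (linear_graphZ (- t^-1) Gp).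
  rewrite /= => /(ler_wpM2l (ltW nt_gt0)).
  rewrite mulrBr mulrA mulrNN mulfV ?lt_eqF // mul1r.
  rewrite -[X in X * `|_|](gtr0_norm nt_gt0) -normrZ scalerBr scalerA mulrNN.
  by rewrite mulfV ?lt_eqF // scale1r scaleNr opprK; lra.
- have [_] := c_sep _ (linear_graphZ t^-1 Gp).
  rewrite /= => /(ler_wpM2l (ltW t_gt0)).
  rewrite mulrBr mulrA mulfV ?gt_eqF // mul1r -[X in X * `|_|](gtr0_norm t_gt0).
  by rewrite -normrZ scalerDr scalerA mulfV ?gt_eqF // scale1r; lra.
- by rewrite scale0r mul0r !addr0; apply: (domG Gp).
Qed.

Definition graph_extension z c :=
  [set q | exists p t, G p /\ q = (p.1 + t *: z, p.2 + t * c)].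

Lemma graph_extension_linear z c : linear_graph (graph_extension z c).
Proof.
move=> a _ _ [p1 [t1 [G1 ->]]] [p2 [t2 [G2 ->]]].
exists (a *: p1.1 + p2.1, a * p1.2 + p2.2), (a * t1 + t2).
split; first exact: linG.
congr pair => /=; last by ring.
by rewrite scalerDr scalerA addrACA scalerDl.
Qed.

Lemma graph_extension_dominated z c :
  (forall p, G p -> p.2 - `|p.1 - z| <= c /\ c <= `|p.1 + z| - p.2) ->
  norm_dominated (graph_extension z c).
Proof.
by move=> c_sep _ [p [t [Gp ->]]]; apply: dominated_extension_bound.
Qed.

Lemma sub_graph_extension z c : G `<=` graph_extension z c.
Proof.
by move=> p Gp; exists p, 0; rewrite scale0r mul0r !addr0 -surjective_pairing.
Qed.

Lemma graph_extension_new z c : G !=set0 -> graph_extension z c (z, c).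
Proof.
move=> [p Gp]; exists (0, 0), 1; rewrite scale1r mul1r !add0r.
by split => //; apply: linear_graph0 Gp.
Qed.

End DominatedGraph.

Section NormingFunctional.
Variables (R : realType) (X : normedModType R) (x : X).

(* The last clause, rather than [G (x, 1)] itself, lets the empty union of a
   chain qualify, as Zorn's lemma requires. *)
Definition norming_graph (G : set (X * R)) :=
  [/\ linear_graph G, norm_dominated G & G !=set0 -> G (x, 1)].

Lemma maximal_norming_graph :
  exists A, norming_graph A /\ forall B, A `<` B -> ~ norming_graph B.
Proof.
apply: Zorn_bigcup => F FP Ftot; split.
- move=> a p q [G1 FG1 G1p] [G2 FG2 G2q].
  have [G12|G21] := Ftot _ _ FG1 FG2.
    exists G2 => //; have [linG2 _ _] := FP _ FG2.
    by apply: linG2 => //; exact: G12.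
  exists G1 => //; have [linG1 _ _] := FP _ FG1.
  by apply: linG1 => //; exact: G21.
- by move=> p [G FG Gp]; have [_ domG _] := FP _ FG; apply: domG.
- move=> [p [G FG Gp]]; exists G => //; have [_ _ Gx] := FP _ FG.
  by apply: Gx; exists p.
Qed.

Lemma norming_line : `|x| = 1 -> norming_graph [set (t *: x, t) | t in setT].
Proof.
move=> nx; split.
- move=> a _ _ [t1 _ <-] [t2 _ <-]; exists (a * t1 + t2) => //=.
  by rewrite scalerDl scalerA.
- by move=> _ [t _ <-] /=; rewrite normrZ nx mulr1 ler_norm.
- by move=> _; exists 1 => //; rewrite scale1r.
Qed.

Lemma norming_functional : `|x| = 1 -> exists2 phi, dual_ball phi & phi x = 1.
Proof.
move=> nx; have [A [[linA domA Ax] A_max]] := maximal_norming_graph.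
have A_ne : A !=set0.
  apply: contrapT => /set0P/negP/negbNE/eqP A0.
  apply: (A_max _ _ (norming_line nx)); rewrite A0; split => // /(_ (x, 1)).
  by apply => //; exists 1 => //; rewrite scale1r.
have A_total z : exists r, A (z, r).
  apply: contrapT => Az.
  have [c c_sep] := dominated_extension_constant linA domA z A_ne.
  apply: (A_max (graph_extension A z c)).
    split; first exact: sub_graph_extension.
    move=> /(_ (z, c) (graph_extension_new linA z c A_ne)) Azc.
    by apply: Az; exists c.
  split.
  - exact: graph_extension_linear.
  - exact: graph_extension_dominated.
  - by move=> _; apply: sub_graph_extension; apply: Ax.
have [phi A_phi] := choice A_total.
have phi_unique y r : A (y, r) -> phi y = r.
  exact: (dominated_graph_functional linA domA (A_phi y)).
have lin_phi : is_lin_functional phi.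
  by move=> a y z; apply/phi_unique/(linA a _ _ (A_phi y) (A_phi z)).
exists phi; last exact/phi_unique/Ax.
split => //; apply: dual_norm_le => // y.
have phiN : phi (- y) = - phi y.
  apply: phi_unique; have := linear_graphZ linA (-1) (A_phi y).
  by rewrite /= scaleN1r mulN1r.
rewrite mul1r ler_norml (domA _ (A_phi y)) andbT.
have := domA _ (A_phi (- y)); rewrite /= normrN phiN; lra.
Qed.

End NormingFunctional.

Theorem mainTheorem5 (R : realType) (X : completeNormedModType R) (x : X)
  (gamma : R) (k : nat) :
  `|x| = 1 -> 0 < gamma -> 0 < 1 - 2 * k%:R * (1 - gamma) ->
  (dual_diam (wslice x (1 - 2 * k%:R * (1 - gamma)))
     <= (2 * k%:R)%:E * dual_diam (wslice x gamma))%E.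
Proof.
move=> nx _ _; set c : R := 2 * k%:R; set alpha := 1 - c * (1 - gamma).
have [phi Bphi phix] := norming_functional nx.
have c_ge0 : 0 <= c by rewrite mulr_ge0.
rewrite {1}/dual_diam ge_max mule_ge0 ?lee_fin ?dual_diam_ge0 //=.
apply: ge_ereal_sup => _ [f Sf [g Sg <-]].
have k_gt0 : (0 < k)%N.
  have := wslice_lt_norm Sf; rewrite nx => alpha_lt1.
  rewrite lt0n; apply: contraTneq alpha_lt1; rewrite /alpha /c => ->.
  by rewrite mulr0 mul0r subr0 ltxx.
have k_ge1 : 1 <= k%:R :> R by rewrite ler1n.
have c_ge1 : 1 <= c by rewrite /c; lra.
pose t := c^-1.
have t_gt0 : 0 < t by rewrite invr_gt0; lra.
have t_le1 : t <= 1 by rewrite invf_le1 //; lra.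
have gammaE : 1 - t * (1 - alpha) = gamma by rewrite /alpha /t; field; lra.
have := wslice_mix Bphi phix t_gt0 t_le1 Sf; rewrite gammaE => Sf_mix.
have := wslice_mix Bphi phix t_gt0 t_le1 Sg; rewrite gammaE => Sg_mix.
pose mix_diff := dual_mix t phi f \- dual_mix t phi g.
apply: le_trans (dual_norm_le_scale (g := mix_diff) c_ge0 _) _.
  move=> y; rewrite /mix_diff /= dual_mix_sub normrM (gtr0_norm t_gt0).
  by rewrite mulrA mulfV ?mul1r //; lra.
by rewrite lee_wpmul2l ?lee_fin // dual_norm_le_diam.
Qed.
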